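(* Let $G$ be a connected Lie group with identity $e$ and consider a discrete-time linear control system on $G$ with control range $U\subset\mathbb{R}^m$ a compact neighborhood of $0$. Let $g\in\mathcal{R}$ be such that $f_0^k(g)\in\mathcal{R}$ for all $k\in\mathbb{Z}$. Then $\mathcal{R}\cdot g\subset\mathcal{R}$.
   Context: A discrete-time linear control system on $G$ is given by $f:G\times U\to G$, $f_u:=f(\cdot,u)$, such that $f_0$ is an automorphism of $G$ and $f_u(g)=f_u(e)f_0(g)$ for all $g\in G,u\in U$. Solutions: $\varphi(0,g,u)=g$, $\varphi(k,g,u)=f_{u_{k-1}}\circ\cdots\circ f_{u_0}(g)$ for $u=(u_i)\in U^{\mathbb{N}_0}$; $\mathcal{R}=\bigcup_{k\in\mathbb{N}}\{\varphi(k,e,u)\}$. *)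

From HB Require Import structures.
From mathcomp Require Import all_boot all_order all_algebra.
From mathcomp Require Import all_classical all_reals all_analysis.
Set Implicit Arguments. Unset Strict Implicit. Unset Printing Implicit Defensive.
Import Order.TTheory GRing.Theory Num.Theory.
Import numFieldTopology.Exports numFieldNormedType.Exports.
Local Open Scope classical_set_scope.

Definition is_group (G : Type) (mul : G -> G -> G) (inv : G -> G) (e : G) : Prop :=
  (forall x y z, mul x (mul y z) = mul (mul x y) z) /\
  (forall x, mul e x = x) /\ (forall x, mul x e = x) /\
  (forall x, mul (inv x) x = e) /\ (forall x, mul x (inv x) = e).

Definition is_topological_group (G : topologicalType)
  (mul : G -> G -> G) (inv : G -> G) (e : G) : Prop :=
  is_group mul inv e /\
  continuous (fun p : G * G => mul p.1 p.2) /\ continuous inv.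

Definition is_automorphism (G : Type) (mul : G -> G -> G) (phi : G -> G) : Prop :=
  bijective phi /\ forall x y, phi (mul x y) = mul (phi x) (phi y).

Definition is_dt_linear_system (G V : Type) (zero : V) (mul : G -> G -> G) (e : G)
  (U : set V) (f : G -> V -> G) : Prop :=
  is_automorphism mul (fun g => f g zero) /\
  forall g u, U u -> f g u = mul (f e u) (f g zero).

Fixpoint sol (G V : Type) (f : G -> V -> G) (k : nat) (g : G) (u : nat -> V) : G :=
  match k with
  | 0 => g
  | k'.+1 => f (sol f k' g u) (u k')
  end.

Definition reach (G V : Type) (U : set V) (f : G -> V -> G) (e : G) : set G :=
  [set y | exists k : nat, exists u : nat -> V,
     (0 < k)%N /\ (forall i, U (u i)) /\ y = sol f k e u].

(* Graph of the integer powers of a (bijective) map f0: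
   zpow_rel f0 k g y  <->  y = f0^k(g), for k : int. *)
Definition zpow_rel (G : Type) (f0 : G -> G) (k : int) (g y : G) : Prop :=
  match k with
  | Posz n => y = iter n f0 g
  | Negz n => iter n.+1 f0 y = g
  end.

From HB Require Import structures.
From mathcomp Require Import all_boot all_order all_algebra.
From mathcomp Require Import all_classical all_reals all_analysis.
Import Order.TTheory GRing.Theory Num.Theory.
Import numFieldTopology.Exports numFieldNormedType.Exports.
Local Open Scope classical_set_scope.
Local Open Scope ring_scope.

(* Linearity gives phi(k, y, u) = phi(k, e, u) f_0^k(y).  Writing h = phi(k, e, u)
   and y = f_0^-k(g), which is reachable by hypothesis, h g = phi(k, y, u) is
   reached by first steering e to y and then applying u for k steps. *)

Section Solutions.
Variables (G V : Type) (f : G -> V -> G).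

Definition concat_control (n : nat) (v u : nat -> V) (i : nat) : V :=
  if (i < n)%N then v i else u (i - n)%N.

Lemma eq_sol n x u w :
  (forall i, (i < n)%N -> u i = w i) -> sol f n x u = sol f n x w.
Proof.
elim: n => [//|n IHn] eq_uw /=.
by rewrite eq_uw // IHn // => i lt_in; rewrite eq_uw // ltnS ltnW.
Qed.

Lemma sol_concat n j x v u :
  sol f (n + j) x (concat_control n v u) = sol f j (sol f n x v) u.
Proof.
elim: j => [|j IHj] /=.
  by rewrite addn0; apply: eq_sol => i lt_in; rewrite /concat_control lt_in.
by rewrite addnS /= IHj /concat_control ltnNge leq_addr addKn.
Qed.

Lemma reach_sol (U : set V) e x k u :
  reach U f e x -> (forall i, U (u i)) -> reach U f e (sol f k x u).
Proof.
move=> [n [v [n_gt0 [Uv ->]]]] Uu.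
exists (n + k)%N, (concat_control n v u); split; first by rewrite addn_gt0 n_gt0.
split; first by move=> i; rewrite /concat_control; case: ifP.
by rewrite sol_concat.
Qed.

End Solutions.

Section LinearSystems.
Context {G V : Type} {zero : V} {mul : G -> G -> G} {e : G}.
Context {U : set V} {f : G -> V -> G}.
Hypotheses (mulA : forall x y z, mul x (mul y z) = mul (mul x y) z)
           (mul1g : forall x, mul e x = x)
           (linear_f : is_dt_linear_system zero mul e U f).

Lemma sol_linear k y u : (forall i, U (u i)) ->
  sol f k y u = mul (sol f k e u) (iter k (f^~ zero) y).
Proof.
have [[_ f0M] f_def] := linear_f.
move=> Uu; elim: k => [|k IHk] /=; first by rewrite mul1g.
by rewrite IHk f_def // [f (sol f k e u) _]f_def // f0M !mulA.
Qed.

End LinearSystems.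

Lemma iter_can (T : Type) (f g : T -> T) n :
  cancel g f -> cancel (iter n g) (iter n f).
Proof. by move=> gK; elim: n => [//|n IHn] x; rewrite iterSr iterS gK IHn. Qed.

Theorem lemma2p15 (R : realType) (m : nat) (G : topologicalType)
  (mul : G -> G -> G) (inv : G -> G) (e : G)
  (HG : is_topological_group mul inv e) (Hconn : connected [set: G])
  (U : set 'rV[R]_m) (HUc : compact U) (HUn : nbhs (0 : 'rV[R]_m) U)
  (f : G -> 'rV[R]_m -> G) (Hf : is_dt_linear_system 0 mul e U f)
  (g : G) (Hg : reach U f e g)
  (Hpow : forall (k : int) (y : G), zpow_rel (fun x => f x 0) k g y -> reach U f e y) :
  forall h, reach U f e h -> reach U f e (mul h g).
Proof.
have [[mulA [mul1g _]] _] := HG.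
have [[[f0inv _ f0invK] _] _] := Hf.
move=> _ [k [u [k_gt0 [Uu ->]]]].
pose y := iter k f0inv g.
have f0ky : iter k (f^~ 0) y = g by apply: iter_can.
have reach_y : reach U f e y.
  apply: (Hpow (Negz k.-1)).
  by change (iter k.-1.+1 (f^~ 0) y = g); rewrite prednK.
by rewrite -f0ky -(sol_linear mulA mul1g Hf _ _ _ Uu); apply: reach_sol.
Qed.
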